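(* Let $\tilde d\in C^1(\mathbb{R})$ satisfy $\tilde d(0)=0$, $\tilde d'(m)>d_0$ and $|\tilde d'(m)|\le d_1+d_2|m|^p$ for all $m\in\mathbb{R}$, for some constants $d_0>0$ and $d_1,d_2,p\ge 0$. Then for any $\tilde f,\tilde g\in L^2(0,1)$ and $\tilde h=(\tilde h(0),\tilde h(1))\in\mathbb{R}^2$ the stationary system $$\partial_x\tilde m(x)=\tilde f(x),\quad \partial_x\tilde p(x)+\tilde d(\tilde m(x))=\tilde g(x)\quad (x\in(0,1)),\qquad \tilde p(x)=\tilde h(x)\quad (x\in\{0,1\})$$ has a unique solution $(\tilde p,\tilde m)\in H^1(0,1)\times H^1(0,1)$, and there exists a constant $c>0$, independent of $\tilde d$ and of $\tilde f,\tilde g,\tilde h$, such that $$\|\tilde m\|_{H^1}\le \frac{c}{d_0}\big(\|\tilde g\|_{L^2}+|\tilde h|_1+d_1\|\tilde f\|_{L^2}+d_2\|\tilde f\|_{L^2}^{p+1}\big)+c\|\tilde f\|_{L^2}=:M,$$ $$\|\tilde p\|_{H^1}\le c\big(\|\tilde g\|_{L^2}+|\tilde h|_1+d_1M+d_2M^{p+1}\big).$$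
   Context: $|\tilde h|_1=|\tilde h(0)|+|\tilde h(1)|$ denotes the $\ell^1$-norm on $\mathbb{R}^2$. $L^2$ and $H^1$ denote the usual Lebesgue and Sobolev spaces on $(0,1)$. *)

From HB Require Import structures.
From mathcomp Require Import all_boot all_order all_algebra.
From mathcomp Require Import all_classical all_reals all_analysis.
Set Implicit Arguments. Unset Strict Implicit. Unset Printing Implicit Defensive.
Import Order.TTheory GRing.Theory Num.Theory.
Import numFieldNormedType.Exports.
Local Open Scope classical_set_scope.
Local Open Scope ring_scope.

Section Defs.
Variable R : realType.

Definition I01 : set R := `[0, 1]%classic.

Definition inL2 (f : R -> R) : Prop :=
  measurable_fun I01 f /\
  (\int[@lebesgue_measure R]_(x in I01) ((f x) ^+ 2)%:E < +oo)%E.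

Definition L2norm (f : R -> R) : R :=
  Num.sqrt (fine (\int[@lebesgue_measure R]_(x in I01) ((f x) ^+ 2)%:E)).

(* u is an H^1(0,1) function with (weak) derivative du: du is in L^2(0,1)
   and u is (on [0,1]) the absolutely continuous representative
   u(x) = u(0) + \int_0^x du. *)
Definition isH1 (u du : R -> R) : Prop :=
  inL2 du /\
  forall x, 0 <= x <= 1 ->
    u x = u 0 + Rintegral (@lebesgue_measure R) `[0, x]%classic du.

Definition H1norm (u du : R -> R) : R :=
  Num.sqrt (L2norm u ^+ 2 + L2norm du ^+ 2).

Definition solves (d f g : R -> R) (h0 h1 : R) (p dp m dm : R -> R) : Prop :=
  isH1 p dp /\ isH1 m dm /\
  {ae @lebesgue_measure R, forall x, 0 < x < 1 -> dm x = f x} /\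
  {ae @lebesgue_measure R, forall x, 0 < x < 1 -> dp x + d (m x) = g x} /\
  p 0 = h0 /\ p 1 = h1.

End Defs.

From Pilot Require Import Defs.
From HB Require Import structures.
From mathcomp Require Import all_boot all_order all_algebra.
From mathcomp Require Import all_classical all_reals all_analysis.
From mathcomp Require Import lra measurable_realfun.
Import Order.TTheory GRing.Theory Num.Theory.
Import numFieldNormedType.Exports.
Local Open Scope classical_set_scope.
Local Open Scope ring_scope.
Set Implicit Arguments. Unset Strict Implicit. Unset Printing Implicit Defensive.

(* The equation [m' = f] forces [m = b + F] with [F x = \int_0^x f] and a free
   constant [b = m 0]; the equation for [p] and [p 0 = h0] then determine [p],
   and [p 1 = h1] becomes [Phi b = h0 - h1 + \int_0^1 g] for the shooting
   function [Phi b = \int_0^1 d (b + F)].  Since [d' > d0], we have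
   [Phi b - Phi a >= d0 (b - a)], so [Phi] is a continuous increasing bijection
   and [b] exists, is unique and satisfies [|b| <= |Phi b - Phi 0| / d0].  The
   estimates follow from [|F| <= ||f||] (Cauchy-Schwarz on [0, 1]) and
   [|d s| <= (d1 + d2 K^p) K] for [|s| <= K]. *)

Lemma measurable_I01 {R : realType} : measurable (@I01 R).
Proof. exact: measurable_itv. Qed.
#[local] Hint Extern 0 (measurable _) => exact: measurable_I01 : core.

Section integrals_on_unit_interval.
Context {R : realType}.
Local Notation mu := (@lebesgue_measure R).
Local Notation I01 := (@I01 R).
Implicit Types (u v : R -> R) (K : R).

Lemma integrableS_I01 (D : set R) (f : R -> \bar R) : measurable D ->
  D `<=` I01 -> mu.-integrable I01 f -> mu.-integrable D f.
Proof. by move=> mD DI iu; apply: integrableS iu => //; exact: measurable_I01. Qed.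

Lemma I01E x : I01 x = (0 <= x <= 1).
Proof. by rewrite /Defs.I01 /= in_itv. Qed.

Lemma lebesgue_measure_I01 : mu I01 = 1%E.
Proof. by rewrite /I01 lebesgue_measure_itv/= lte01 sube0. Qed.

Lemma Rintegral_cst_I01 K : \int[mu]_(x in I01) K = K.
Proof.
rewrite Rintegral_cst //.
by have /= -> := lebesgue_measure_I01; rewrite mulr1.
Qed.

Lemma integrable_cst_I01 K : mu.-integrable I01 (EFin \o cst K).
Proof.
apply/integrableP; split; first exact/measurable_EFinP/measurable_cst.
rewrite (eq_integral (fun=> `|K|%:E))// integral_cst //.
by have /= -> := lebesgue_measure_I01; rewrite mule1 ltry.
Qed.

Lemma integrableZl_I01 k u : mu.-integrable I01 (EFin \o u) ->
  mu.-integrable I01 (EFin \o (fun x => k * u x)).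
Proof. by move=> iu; apply: eq_integrable (integrableZl _ k iu) => // x _ /=. Qed.

Lemma integrableD_I01 u v : mu.-integrable I01 (EFin \o u) ->
  mu.-integrable I01 (EFin \o v) -> mu.-integrable I01 (EFin \o (fun x => u x + v x)).
Proof. by move=> iu iv; apply: eq_integrable (integrableD _ iu iv) => // x _ /=. Qed.

Lemma integrableB_I01 u v : mu.-integrable I01 (EFin \o u) ->
  mu.-integrable I01 (EFin \o v) -> mu.-integrable I01 (EFin \o (fun x => u x - v x)).
Proof. by move=> iu iv; apply: eq_integrable (integrableB _ iu iv) => // x _ /=. Qed.

Lemma bounded_integrable u K : measurable_fun I01 u ->
  (forall x, I01 x -> `|u x| <= K) -> mu.-integrable I01 (EFin \o u).
Proof.
move=> mu_ uK; apply: le_integrable (integrable_cst_I01 K) => //.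
  exact/measurable_EFinP.
by move=> x Ix /=; rewrite lee_fin (le_trans (uK x Ix)) ?ler_norm.
Qed.

Lemma inL2P u : inL2 u <->
  measurable_fun I01 u /\ mu.-integrable I01 (EFin \o (fun x => u x ^+ 2)).
Proof.
have sqr_normE : (\int[mu]_(x in I01) `|(u x ^+ 2)%:E| =
                  \int[mu]_(x in I01) (u x ^+ 2)%:E)%E.
  by apply: eq_integral => x _; rewrite gee0_abs// lee_fin sqr_ge0.
split=> [[mu_ fin]|[mu_ /integrableP[_ fin]]]; split=> //.
  apply/integrableP; rewrite sqr_normE; split=> //.
  exact/measurable_EFinP/measurable_funX.
by rewrite -sqr_normE.
Qed.

Lemma inL2_integrable_sqr u : inL2 u ->
  mu.-integrable I01 (EFin \o (fun x => u x ^+ 2)).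
Proof. by case/inL2P. Qed.

Lemma L2norm_ge0 u : 0 <= L2norm u.
Proof. exact: sqrtr_ge0. Qed.

Lemma L2norm_sqr u : L2norm u ^+ 2 = \int[mu]_(x in I01) u x ^+ 2.
Proof. by rewrite sqr_sqrtr// Rintegral_ge0// => x _; exact: sqr_ge0. Qed.

Lemma inL2_integrable u : inL2 u -> mu.-integrable I01 (EFin \o u).
Proof.
move=> /[dup] uL2 /inL2P[mu_ iu2].
have i : mu.-integrable I01 (EFin \o (fun x => u x ^+ 2 + 1)).
  exact: integrableD_I01 iu2 (integrable_cst_I01 1).
apply: le_integrable i => //; first exact/measurable_EFinP.
move=> x _ /=; rewrite lee_fin [X in _ <= X]ger0_norm ?addr_ge0 ?sqr_ge0//.
rewrite -real_normK ?num_real//; have := sqr_ge0 (`|u x| - 1); nra.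
Qed.

Lemma bounded_inL2 u K : measurable_fun I01 u ->
  (forall x, I01 x -> `|u x| <= K) -> inL2 u /\ L2norm u <= K.
Proof.
move=> mu_ uK.
have K0 : 0 <= K.
  by apply: le_trans (normr_ge0 (u 0)) (uK 0 _); rewrite I01E lexx ler01.
have u2K : forall x, I01 x -> `|u x ^+ 2| <= K ^+ 2.
  by move=> x /uK; rewrite normrX; apply: lerXn2r; rewrite ?nnegrE.
have iu2 := bounded_integrable (measurable_funX 2 mu_) u2K.
split; first exact/inL2P.
rewrite -(ger0_norm K0) -sqrtr_sqr ler_wsqrtr// -[leRHS]Rintegral_cst_I01.
apply: le_Rintegral => //; first exact: integrable_cst_I01.
by move=> x /u2K; rewrite ger0_norm ?sqr_ge0.
Qed.

Lemma Rintegral_normr_le_L2norm u : inL2 u ->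
  \int[mu]_(x in I01) `|u x| <= L2norm u.
Proof.
move=> uL2; apply/ler_addgt0Pr => e e0.
set L := L2norm u; set s := L + e; set I := \int[mu]_(x in I01) `|u x|.
have L0 : 0 <= L := L2norm_ge0 u.
have s0 : 0 < s by rewrite /s; lra.
have iu := integrable_norm (inL2_integrable uL2).
(* AM-GM [2 s |u| <= u^2 + s^2] integrated over [0, 1], for any [s > L] *)
have amgm : 2 * s * I <= L ^+ 2 + s ^+ 2.
  rewrite /I -RintegralZl // L2norm_sqr.
  rewrite -[X in _ + X](Rintegral_cst_I01 (s ^+ 2)) -RintegralD //;
    [|exact: inL2_integrable_sqr|exact: integrable_cst_I01].
  apply: le_Rintegral => //.
  - exact: integrableZl_I01 iu.
  - exact: integrableD_I01 (inL2_integrable_sqr uL2) (integrable_cst_I01 _).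
  move=> x _; rewrite -[u x ^+ 2]real_normK ?num_real//.
  have := sqr_ge0 (`|u x| - s); nra.
have Ls : L ^+ 2 <= s ^+ 2 by rewrite /s; nra.
by rewrite -(ler_pM2l (_ : 0 < 2 * s)) ?mulr_gt0//; nra.
Qed.

Lemma inL2B u v : inL2 u -> inL2 v ->
  inL2 (fun x => u x - v x) /\ L2norm (fun x => u x - v x) <= 2 * (L2norm u + L2norm v).
Proof.
move=> /inL2P[mu_ iu] /inL2P[mv iv].
have mw := measurable_funB mu_ mv.
have i2 : mu.-integrable I01 (EFin \o (fun x => 2 * u x ^+ 2 + 2 * v x ^+ 2)).
  exact: integrableD_I01 (integrableZl_I01 2 iu) (integrableZl_I01 2 iv).
have w2 x : (u x - v x) ^+ 2 <= 2 * u x ^+ 2 + 2 * v x ^+ 2.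
  by have := sqr_ge0 (u x + v x); nra.
have iw : mu.-integrable I01 (EFin \o (fun x => (u x - v x) ^+ 2)).
  apply: le_integrable i2 => //; first exact/measurable_EFinP/measurable_funX.
  move=> x _ /=; rewrite lee_fin !ger0_norm ?sqr_ge0 ?w2//.
  by rewrite addr_ge0// mulr_ge0// sqr_ge0.
split; first exact/inL2P.
have w2int : L2norm (fun x => u x - v x) ^+ 2 <=
             2 * L2norm u ^+ 2 + 2 * L2norm v ^+ 2.
  rewrite !L2norm_sqr -!RintegralZl //.
  rewrite -RintegralD //; try exact: integrableZl_I01.
  by apply: le_Rintegral => //; exact: integrableD_I01.
have [a0 b0] := (L2norm_ge0 u, L2norm_ge0 v).
have ab0 : 0 <= 2 * (L2norm u + L2norm v) by nra.
by rewrite -(ler_pXn2r (_ : (0 < 2)%N)) ?nnegrE ?L2norm_ge0//; nra.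
Qed.

Lemma H1norm_le u du : H1norm u du <= L2norm u + L2norm du.
Proof.
have [a0 b0] := (L2norm_ge0 u, L2norm_ge0 du).
rewrite /H1norm -(ger0_norm (addr_ge0 a0 b0)) -sqrtr_sqr ler_wsqrtr//; nra.
Qed.

End integrals_on_unit_interval.

Section primitive_on_unit_interval.
Context {R : realType}.
Local Notation mu := (@lebesgue_measure R).
Local Notation I01 := (@I01 R).
Implicit Types (u v : R -> R).

Lemma subset_itv0_I01 x : 0 <= x <= 1 -> `[0, x] `<=` I01.
Proof.
move=> /andP[_ x1] y; rewrite I01E /= in_itv /= => /andP[-> yx].
exact: le_trans yx x1.
Qed.

Lemma parameterized_integral00 u : parameterized_integral mu 0 0 u = 0.
Proof. by rewrite /parameterized_integral set_itv1 Rintegral_set1. Qed.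

Lemma measurable_parameterized_integral u : mu.-integrable I01 (EFin \o u) ->
  measurable_fun I01 (fun x => parameterized_integral mu 0 x u).
Proof.
move=> iu; apply: subspace_continuous_measurable_fun => //.
exact: parameterized_integral_continuous ler01 iu.
Qed.

Lemma normr_parameterized_integral_le u x : inL2 u -> 0 <= x <= 1 ->
  `|parameterized_integral mu 0 x u| <= L2norm u.
Proof.
move=> uL2 /subset_itv0_I01 sx.
have iu := integrable_norm (inL2_integrable uL2).
have iux : mu.-integrable `[0, x] (EFin \o u).
  exact: integrableS_I01 (measurable_itv _) sx (inL2_integrable uL2).
apply: le_trans (le_normr_Rintegral _ iux) _ => //.
apply: le_trans (Rintegral_normr_le_L2norm uL2); apply: fine_le.
- by apply: (integrable_fin_num _ (integrableS_I01 (measurable_itv _) sx iu)).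
- by apply: (integrable_fin_num _ iu).
by apply: ge0_subset_integral => //; case/integrableP: iu.
Qed.

Lemma ae_eq_parameterized_integral u v x :
  mu.-integrable I01 (EFin \o u) -> mu.-integrable I01 (EFin \o v) ->
  {ae mu, forall y, 0 < y < 1 -> u y = v y} -> 0 <= x <= 1 ->
  parameterized_integral mu 0 x u = parameterized_integral mu 0 x v.
Proof.
move=> iu iv uv x01; have sx := subset_itv0_I01 x01.
have [->|x0] := eqVneq x 0; first by rewrite !parameterized_integral00.
have sox : `]0, x[ `<=` `[0, x] by apply: subset_itvW.
(* [uv] only speaks about the open interval; the endpoints are null *)
have to_open w : mu.-integrable I01 (EFin \o w) ->
    parameterized_integral mu 0 x w = \int[mu]_(y in `]0, x[) w y.
  move=> iw; rewrite /parameterized_integral -Rintegral_itv_obnd_cbnd.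
    rewrite -Rintegral_itv_bndo_bndc//.
    exact: integrableS_I01 (measurable_itv _) (subset_trans sox sx) iw.
  apply: integrableS_I01 (measurable_itv _) _ iw.
  by apply: subset_trans sx => y /=; rewrite !in_itv /= => /andP[/ltW -> ->].
rewrite (to_open u iu) (to_open v iv); congr fine; apply: ae_eq_integral => //.
- by apply: measurable_funS (measurable_int _ iu) => //; exact: subset_trans sox sx.
- by apply: measurable_funS (measurable_int _ iv) => //; exact: subset_trans sox sx.
apply: (filterS (Filter := ae_filter_ringOfSetsType mu)) uv => y uvy /=.
rewrite in_itv /= => /andP[y0 yx]; rewrite uvy// y0 /=.
by apply: lt_le_trans yx _; case/andP: x01.
Qed.

End primitive_on_unit_interval.

Section increasing_nonlinearity.
Context {R : realType}.
Variables (d : R -> R) (d0 d1 d2 p : R).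
Hypothesis d_derivable : forall x, derivable d x 1.

Lemma derivable_continuous : continuous d.
Proof.
move=> x; apply: differentiable_continuous.
exact/derivable1_diffP.
Qed.

Let d_mvt a b : a <= b -> exists2 c, a <= c <= b & d b - d a = derive1 d c * (b - a).
Proof.
move=> ab; have d'_derive x : x \in `]a, b[ -> is_derive x 1 d (derive1 d x).
  by move=> _; rewrite derive1E; exact: derivableP.
have [c] := MVT_segment ab d'_derive (continuous_subspaceT derivable_continuous).
by rewrite in_itv /=; exists c.
Qed.

Lemma derive1_gt_incr a b : (forall y, d0 < derive1 d y) -> a <= b ->
  d0 * (b - a) <= d b - d a.
Proof.
move=> d'_gt ab; have [c _ ->] := d_mvt ab.
by apply: ler_wpM2r; [rewrite subr_ge0|exact: ltW].
Qed.

Hypotheses (d2_ge0 : 0 <= d2) (p_ge0 : 0 <= p).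
Hypothesis derive1_le : forall y, `|derive1 d y| <= d1 + d2 * powR `|y| p.

Lemma derive1_le_lipschitz K a b : `|a| <= K -> `|b| <= K ->
  `|d b - d a| <= (d1 + d2 * powR K p) * `|b - a|.
Proof.
wlog ab : a b / a <= b.
  move=> wlog_ab aK bK; have [ab|/ltW ba] := leP a b; first exact: wlog_ab ab aK bK.
  by rewrite distrC [`|b - a|]distrC; exact: wlog_ab ba bK aK.
move=> aK bK; have [c /andP[ac cb] ->] := d_mvt ab.
rewrite normrM; apply: ler_wpM2r => //.
apply: le_trans (derive1_le c) _; rewrite lerD2l ler_wpM2l//.
have cK : `|c| <= K.
  rewrite ler_norml (le_trans _ ac) ?(le_trans cb)//.
  - by case/ler_normlP: bK.
  - by case/ler_normlP: aK; rewrite lerNl.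
by apply: ge0_ler_powR; rewrite ?nnegrE// (le_trans _ cK).
Qed.

Hypotheses (d1_ge0 : 0 <= d1) (d_0 : d 0 = 0).

Lemma normr_le_growth K s : `|s| <= K -> `|d s| <= d1 * K + d2 * powR K (p + 1).
Proof.
move=> sK; have K0 : 0 <= K := le_trans (normr_ge0 s) sK.
have z0 : `|0 : R| <= K by rewrite normr0.
have := derive1_le_lipschitz z0 sK; rewrite d_0 !subr0 => /le_trans; apply.
rewrite powRD ?powRr1//; last by rewrite gt_eqF ?ltr_wpDl.
rewrite mulrA -mulrDl; apply: ler_wpM2l => //.
by rewrite addr_ge0 ?mulr_ge0 ?powR_ge0.
Qed.

End increasing_nonlinearity.

Section increasing_at_rate.
Context {R : realType}.
Variables (k : R) (Phi : R -> R).
Hypotheses (k_gt0 : 0 < k) (Phi_incr : forall a b, a <= b -> k * (b - a) <= Phi b - Phi a).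

Lemma incr_at_rate_inj : injective Phi.
Proof.
move=> a b; wlog ab : a b / a <= b.
  move=> wlog_ab Pab; have [ab|/ltW ba] := leP a b; first exact: wlog_ab.
  by apply/esym/(wlog_ab _ _ ba)/esym.
move=> Pab; have := Phi_incr ab; rewrite Pab subrr pmulr_rle0// subr_le0 => ba.
by apply/eqP; rewrite eq_le ab.
Qed.

Lemma incr_at_rate_solve : continuous Phi ->
  forall t, exists2 a, Phi a = t & `|a| <= `|t - Phi 0| / k.
Proof.
move=> Phi_cont t; set K := `|t - Phi 0| / k.
have kK : k * K = `|t - Phi 0| by rewrite /K mulrC divfK ?gt_eqF.
have K0 : 0 <= K := divr_ge0 (normr_ge0 _) (ltW k_gt0).
have NK0 : - K <= 0 by rewrite oppr_le0.
have PhiK := Phi_incr K0; have PhiNK := Phi_incr NK0.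
rewrite subr0 kK in PhiK; rewrite sub0r opprK kK in PhiNK.
have [tl tu] := (ler_norm (t - Phi 0), ler_norm (Phi 0 - t)); rewrite distrC in tu.
have t_itv : Num.min (Phi (- K)) (Phi K) <= t <= Num.max (Phi (- K)) (Phi K).
  by rewrite ge_min le_max; apply/andP; split; apply/orP; [left|right]; lra.
have [|a] := IVT _ (continuous_subspaceT Phi_cont) t_itv; first lra.
by rewrite in_itv /= => /andP[aK Ka] Pa; exists a; rewrite // ler_norml aK Ka.
Qed.

End increasing_at_rate.

Lemma locally_lipschitz_continuous {R : realType} (Phi L : R -> R) :
  (forall K a b, `|a| <= K -> `|b| <= K -> `|Phi b - Phi a| <= L K * `|b - a|) ->
  continuous Phi.
Proof.
move=> Phi_lip x; apply/cvgrPdist_le => /= e e0.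
set c := `|L (`|x| + 1)| + 1; have c_gt0 : 0 < c by rewrite ltr_wpDl.
apply/nbhs_ballP; exists (Num.min 1 (e / c)) => /=.
  by rewrite lt_min ltr01 divr_gt0.
move=> t; rewrite /ball /= lt_min => /andP[xt1 xte].
have xK : `|x| <= `|x| + 1 by rewrite lerDl.
have tK : `|t| <= `|x| + 1.
  by have := ler_normD x (t - x); rewrite addrC subrK distrC; lra.
rewrite distrC; apply: le_trans (Phi_lip _ _ _ xK tK) _.
have Lc : L (`|x| + 1) <= c by rewrite (le_trans (ler_norm _))// lerDl.
apply: le_trans (ler_wpM2r (normr_ge0 _) Lc) _.
by rewrite distrC mulrC -ler_pdivlMr// ltW.
Qed.

Section shooting.
Context {R : realType}.
Local Notation mu := (@lebesgue_measure R).
Local Notation I01 := (@I01 R).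
Variables (d : R -> R) (d0 d1 d2 p : R).
Hypotheses (d0_gt0 : 0 < d0) (d1_ge0 : 0 <= d1) (d2_ge0 : 0 <= d2) (p_ge0 : 0 <= p).
Hypotheses (d_derivable : forall x, derivable d x 1) (d_0 : d 0 = 0).
Hypothesis derive1_gt : forall y, d0 < derive1 d y.
Hypothesis derive1_le : forall y, `|derive1 d y| <= d1 + d2 * powR `|y| p.
Variables (f g : R -> R) (h0 h1 : R).
Hypotheses (fL2 : inL2 f) (gL2 : inL2 g).

Let F x := parameterized_integral mu 0 x f.

Let normr_F_le y : I01 y -> `|F y| <= L2norm f.
Proof. by rewrite I01E; exact: normr_parameterized_integral_le. Qed.

Let measurable_F : measurable_fun I01 F.
Proof. exact: measurable_parameterized_integral (inL2_integrable fL2). Qed.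

Let measurable_dF b : measurable_fun I01 (fun y => d (b + F y)).
Proof.
apply: measurableT_comp.
  exact: continuous_measurable_fun (derivable_continuous d_derivable).
exact: measurable_funD (measurable_cst b) measurable_F.
Qed.

Let normr_dF_le b K : `|b| + L2norm f <= K ->
  forall y, I01 y -> `|d (b + F y)| <= d1 * K + d2 * powR K (p + 1).
Proof.
move=> bK y Iy; apply: normr_le_growth => //.
by apply: le_trans (ler_normD _ _) (le_trans _ bK); rewrite lerD2l normr_F_le.
Qed.

Let dF_inL2 b : inL2 (fun y => d (b + F y)).
Proof. exact: (bounded_inL2 (measurable_dF b) (normr_dF_le (lexx _))).1. Qed.

Let integrable_dF b : mu.-integrable I01 (EFin \o (fun y => d (b + F y))).
Proof. exact: inL2_integrable (dF_inL2 b). Qed.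

(* For [m = b + F], the equations give [p 1 = h0 + \int g - Phi b]. *)
Let Phi b := \int[mu]_(y in I01) d (b + F y).

Let Phi_incr a b : a <= b -> d0 * (b - a) <= Phi b - Phi a.
Proof.
move=> ab; have [ia ib] := (integrable_dF a, integrable_dF b).
rewrite /Phi -RintegralB// -[leLHS]Rintegral_cst_I01.
apply: le_Rintegral => //; [exact: integrable_cst_I01|exact: integrableB_I01|].
move=> y _; have aFbF : a + F y <= b + F y by rewrite lerD2r.
by have := derive1_gt_incr d_derivable derive1_gt aFbF; rewrite opprD addrACA subrr addr0.
Qed.

Let Phi_continuous : continuous Phi.
Proof.
apply: (@locally_lipschitz_continuous _ _ (fun K => d1 + d2 * powR (K + L2norm f) p)).
move=> K a b aK bK; have [ia ib] := (integrable_dF a, integrable_dF b).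
rewrite /Phi -RintegralB//.
apply: le_trans (le_normr_Rintegral _ (integrableB_I01 ib ia)) _ => //.
rewrite -[leRHS]Rintegral_cst_I01; apply: le_Rintegral => //.
- exact: integrable_norm (integrableB_I01 ib ia).
- exact: integrable_cst_I01.
move=> y Iy; have shift c : `|c| <= K -> `|c + F y| <= K + L2norm f.
  by move=> cK; apply: le_trans (ler_normD _ _) _; rewrite lerD// normr_F_le.
have := derive1_le_lipschitz d_derivable d2_ge0 p_ge0 derive1_le (shift _ aK) (shift _ bK).
by rewrite opprD addrACA subrr addr0.
Qed.

Let T := h0 - h1 + \int[mu]_(y in I01) g y.
Let A := L2norm g + (`|h0| + `|h1|) + d1 * L2norm f + d2 * powR (L2norm f) (p + 1).

Let normr_T_Phi0_le : `|T - Phi 0| <= A.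
Proof.
have Phi0 : `|Phi 0| <= d1 * L2norm f + d2 * powR (L2norm f) (p + 1).
  apply: le_trans (le_normr_Rintegral _ (integrable_dF 0)) _ => //.
  rewrite -[leRHS]Rintegral_cst_I01; apply: le_Rintegral => //.
  - exact: integrable_norm (integrable_dF 0).
  - exact: integrable_cst_I01.
  by move=> y; apply: normr_dF_le; rewrite normr0 add0r.
have intg : `|\int[mu]_(y in I01) g y| <= L2norm g.
  apply: le_trans (le_normr_Rintegral _ (inL2_integrable gL2)) _ => //.
  exact: Rintegral_normr_le_L2norm.
rewrite /T /A; move: (\int[mu]_(y in I01) g y) intg => G intg.
have := ler_normB (h0 - h1 + G) (Phi 0); have := ler_normD (h0 - h1) G.
have := ler_normB h0 h1; lra.
Qed.

Let shooting_parameter : exists2 a, Phi a = T & `|a| <= A / d0.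
Proof.
have [a Pa aK] := incr_at_rate_solve d0_gt0 Phi_incr Phi_continuous T.
exists a => //; apply: le_trans aK _.
by rewrite ler_pM2r ?invr_gt0//; exact: normr_T_Phi0_le.
Qed.

Let m a y := a + F y.
Let dp a y := g y - d (a + F y).
Let pt a x := h0 + parameterized_integral mu 0 x (dp a).

Let dp_inL2 a : inL2 (dp a).
Proof. exact: (inL2B gL2 (dF_inL2 a)).1. Qed.

Let pt1 a : pt a 1 - h1 = T - Phi a.
Proof.
have [ig ia] := (inL2_integrable gL2, integrable_dF a).
rewrite /pt /parameterized_integral RintegralB// /T /Phi.
by move: (\int[mu]_(y in I01) g y) (\int[mu]_(y in I01) d (a + F y)) => G P; lra.
Qed.

Let shooting_solves a : Phi a = T -> solves d f g h0 h1 (pt a) (dp a) (m a) f.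
Proof.
move=> PaT; split; [|split; [|split; [|split; [|split]]]].
- by split=> [|x _]; [exact: dp_inL2|rewrite /pt parameterized_integral00 addr0].
- by split=> // x _; rewrite /m /F parameterized_integral00 addr0.
- exact: aeW.
- by apply: aeW => x _; rewrite /dp subrK.
- by rewrite /pt parameterized_integral00 addr0.
- by apply/eqP; rewrite -subr_eq0 pt1 PaT subrr.
Qed.

Let solves_shooting_form pt' dpt' mt' dmt' :
  solves d f g h0 h1 pt' dpt' mt' dmt' ->
  Phi (mt' 0) = T /\
  forall x, 0 <= x <= 1 -> pt' x = pt (mt' 0) x /\ mt' x = m (mt' 0) x.
Proof.
move=> [[dpL2 pE] [[dmL2 mE] [dmf [dpg [p0 p1]]]]]; set b := mt' 0.
have mE' x : 0 <= x <= 1 -> mt' x = m b x.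
  move=> x01; rewrite mE// /m /F; congr (_ + _).
  exact: ae_eq_parameterized_integral (inL2_integrable dmL2) (inL2_integrable fL2) dmf x01.
have pE' x : 0 <= x <= 1 -> pt' x = pt b x.
  move=> x01; rewrite pE// p0 /pt; congr (_ + _).
  apply: ae_eq_parameterized_integral (inL2_integrable dpL2) (inL2_integrable (dp_inL2 b)) _ x01.
  apply: (filterS (Filter := ae_filter_ringOfSetsType mu)) dpg => y dpgy y01.
  have y01' : 0 <= y <= 1 by case/andP: y01 => /ltW-> /ltW->.
  by rewrite /dp -(dpgy y01) -[b + F y](mE' y y01') addrK.
split=> [|x x01]; last by rewrite pE' ?mE'.
have pb1 : pt b 1 = h1 by rewrite -p1 pE'// lexx ler01.
by apply/esym/subr0_eq; rewrite -pt1 pb1 subrr.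
Qed.

Let shooting_bounds a : `|a| <= A / d0 ->
  let M := 4 / d0 * A + 4 * L2norm f in
  H1norm (m a) f <= M /\
  H1norm (pt a) (dp a) <= 4 * (L2norm g + (`|h0| + `|h1|) + d1 * M + d2 * powR M (p + 1)).
Proof.
move=> aA M; have [Lf0 Lg0] := (L2norm_ge0 f, L2norm_ge0 g).
have aM : `|a| + L2norm f + L2norm f <= M.
  by rewrite /M mulrAC -mulrA; have := normr_ge0 a; lra.
have aM1 : `|a| + L2norm f <= M by lra.
have Lm : L2norm (m a) <= `|a| + L2norm f.
  apply: (bounded_inL2 (measurable_funD (measurable_cst a) measurable_F) _).2.
  by move=> y Iy; apply: le_trans (ler_normD _ _) _; rewrite lerD2l normr_F_le.
have Ldp : L2norm (dp a) <= 2 * (L2norm g + (d1 * M + d2 * powR M (p + 1))).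
  apply: le_trans (inL2B gL2 (dF_inL2 a)).2 _; rewrite ler_wpM2l// lerD2l.
  exact: (bounded_inL2 (measurable_dF a) (normr_dF_le aM1)).2.
have Lpt : L2norm (pt a) <= `|h0| + L2norm (dp a).
  apply: (bounded_inL2 _ _).2.
    apply: measurable_funD (measurable_cst h0) _.
    exact: measurable_parameterized_integral (inL2_integrable (dp_inL2 a)).
  move=> y Iy; apply: le_trans (ler_normD _ _) _; rewrite lerD2l.
  by apply: normr_parameterized_integral_le; rewrite -?I01E.
have := H1norm_le (m a) f; have := H1norm_le (pt a) (dp a).
have [h0_ge0 h1_ge0] := (normr_ge0 h0, normr_ge0 h1).
(* generalizing these atoms keeps [lra] from unfolding [m], [pt] and [dp] *)
move: (L2norm (m a)) (L2norm (pt a)) (L2norm (dp a)) Lm Lpt Ldp => Xm Xpt Xdp *.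
by split; lra.
Qed.

Lemma shooting_solution : exists (pt dpt mt dmt : R -> R),
  [/\ solves d f g h0 h1 pt dpt mt dmt,
    (forall pt' dpt' mt' dmt', solves d f g h0 h1 pt' dpt' mt' dmt' ->
       forall x, 0 <= x <= 1 -> pt' x = pt x /\ mt' x = mt x) &
    let M := 4 / d0 * (L2norm g + (`|h0| + `|h1|) + d1 * L2norm f
                       + d2 * powR (L2norm f) (p + 1)) + 4 * L2norm f in
    H1norm mt dmt <= M /\
    H1norm pt dpt <= 4 * (L2norm g + (`|h0| + `|h1|) + d1 * M
                          + d2 * powR M (p + 1))].
Proof.
have [a Pa aA] := shooting_parameter.
exists (pt a), (dp a), (m a), f; split.
- exact: shooting_solves.
- move=> pt' dpt' mt' dmt' /solves_shooting_form[Pb E] x x01.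
  by rewrite -(incr_at_rate_inj d0_gt0 Phi_incr (etrans Pb (esym Pa))); exact: E.
- exact: shooting_bounds.
Qed.

End shooting.

Theorem lemma1 (R : realType) :
  exists c : R, 0 < c /\
  forall (d : R -> R) (d0 d1 d2 p : R),
    0 < d0 -> 0 <= d1 -> 0 <= d2 -> 0 <= p ->
    (forall x, derivable d x 1) -> continuous (derive1 d) ->
    d 0 = 0 ->
    (forall y, d0 < derive1 d y) ->
    (forall y, `|derive1 d y| <= d1 + d2 * powR `|y| p) ->
  forall (f g : R -> R) (h0 h1 : R),
    inL2 f -> inL2 g ->
    exists (pt dpt mt dmt : R -> R),
      [/\ solves d f g h0 h1 pt dpt mt dmt,
        (forall pt' dpt' mt' dmt', solves d f g h0 h1 pt' dpt' mt' dmt' ->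
           forall x, 0 <= x <= 1 -> pt' x = pt x /\ mt' x = mt x) &
        let M := c / d0 * (L2norm g + (`|h0| + `|h1|) + d1 * L2norm f
                           + d2 * powR (L2norm f) (p + 1)) + c * L2norm f in
        H1norm mt dmt <= M /\
        H1norm pt dpt <= c * (L2norm g + (`|h0| + `|h1|) + d1 * M
                              + d2 * powR M (p + 1))].
Proof.
exists 4; split=> // d d0 d1 d2 p d0_gt0 d1_ge0 d2_ge0 p_ge0 d_derivable _ d_0 d'_gt d'_le.
by move=> f g h0 h1 fL2 gL2; exact: shooting_solution.
Qed.
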